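(* For any simple undirected graph $G$, $$n_G(\mathcal{C}_3\oplus\mathcal{L}_2)=\frac13\sum_{\{st,uv\}\in Q}\Big(\sum_{w\in\Gamma(s)\setminus\{s,t,u,v\}}a_{tw}+\sum_{w\in\Gamma(u)\setminus\{s,t,u,v\}}a_{vw}\Big).$$
   Context: $a_{ij}$ adjacency entries, $\Gamma(x)$ neighbourhood of $x$. $Q$ is the set of unordered pairs $\{st,uv\}$ of edges with $s,t,u,v$ pairwise distinct. $\mathcal{C}_3\oplus\mathcal{L}_2$ is the disjoint union of a triangle and a single edge (5 vertices). $n_G(F)$ counts (not necessarily induced) subgraphs isomorphic to $F$. *)

(* A simple undirected graph on a finite vertex type T is a
   symmetric irreflexive relation adj : rel T. *)
From mathcomp Require Import all_boot all_order all_algebra.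
Set Implicit Arguments. Unset Strict Implicit. Unset Printing Implicit Defensive.

Definition aent (T : finType) (adj : rel T) (x y : T) : nat := adj x y.

Definition nbhd (T : finType) (adj : rel T) (x : T) : {set T} := [set y | adj x y].

Definition edges (T : finType) (adj : rel T) : {set {set T}} :=
  [set [set x; y] | x in T, y in T & adj x y].

Definition is_copy (F T : finType) (adjF : rel F) (V : {set T}) (E : {set {set T}}) : bool :=
  [exists f : {ffun F -> T},
     [&& injectiveb f, V == f @: setT & E == [set (f @: (e : {set F})) | e in edges adjF]]].

(* n_G(F): number of (not necessarily induced) subgraphs (V,E) of G,
   V a vertex subset and E a subset of the edges of G, isomorphic to F *)
Definition nsub (F T : finType) (adjF : rel F) (adj : rel T) : nat :=
  #|[set VE : {set T} * {set {set T}} |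
       [&& VE.2 \subset edges adj,
           [forall e in VE.2, e \subset VE.1] & is_copy adjF VE.1 VE.2]]|.

Definition C3L2_adj : rel 'I_5 := fun i j =>
  let a := nat_of_ord i in let b := nat_of_ord j in
  [|| (a < 3) && (b < 3) && (a != b),
      (a == 3) && (b == 4) | (a == 4) && (b == 3)].

Definition Qset (T : finType) (adj : rel T) : {set {set {set T}}} :=
  [set P : {set {set T}} | [exists s, exists t, exists u, exists v,
     [&& [&& s != t, s != u, s != v, t != u, t != v & u != v],
         adj s t, adj u v & P == [set [set s; t]; [set u; v]]]]].

(* For an edge e = st of the pair P (excluded vertex set X = {s,t,u,v}):
   sum_{w in Gamma(s) \ X} a_{tw} = sum_{w notin X} a_{sw} a_{tw}
   (symmetric in s,t, so well defined on the unordered edge). *)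
Definition edge_term (T : finType) (adj : rel T) (e X : {set T}) : nat :=
  \sum_(w in ~: X) \prod_(x in e) aent adj x w.

Definition Q_term (T : finType) (adj : rel T) (P : {set {set T}}) : nat :=
  \sum_(e in P) edge_term adj e (cover P).

(* Both sides count the injective homomorphisms f of C3 (+) L2 into G, i.e. the
   ways to map the triangle 0,1,2 and the edge 3-4 onto distinct vertices of G
   along edges of G.  Grouped by the copy of C3 (+) L2 that f spans, they come
   in classes of |Aut(C3 (+) L2)| = 3! * 2 = 12.  Grouped by the triple
   ({f0 f1, f3 f4}, f0 f1, f2) -- a pair in Q, one of its edges, and a common
   neighbour of that edge outside the pair -- they come in classes of 4 (the
   orientations of the two edges), and the right-hand sum counts these triples.
   Hence 12 n = 4 * sum. *)

From mathcomp Require Import all_boot all_order all_algebra.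
Set Implicit Arguments. Unset Strict Implicit. Unset Printing Implicit Defensive.
Import GRing.Theory.

Lemma eq_set2 (T : finType) (a b c d : T) :
  [set a; b] = [set c; d] -> (a = c /\ b = d) \/ (a = d /\ b = c).
Proof.
move=> ab_cd.
have: [&& a \in [set c; d], b \in [set c; d], c \in [set a; b] & d \in [set a; b]].
  by rewrite -ab_cd !set21 !set22 /= ab_cd set21 set22.
rewrite !inE => /and4P[].
by do 4 (case/orP=> /eqP ?); subst; auto.
Qed.

Lemma set2_cancel (T : finType) (a b c : T) : [set a; b] = [set a; c] -> b = c.
Proof. by case/eq_set2 => [[_ ->]|[-> ->]]. Qed.

Lemma imset_set2 (aT rT : finType) (f : aT -> rT) (a b : aT) :
  f @: [set a; b] = [set f a; f b].
Proof. by rewrite imsetU1 imset_set1. Qed.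

Lemma cover_set2 (T : finType) (A B : {set T}) : cover [set A; B] = A :|: B.
Proof. by rewrite /cover bigcup_setU !big_set1. Qed.

Lemma imset_inj_sub (T : finType) (s : T -> T) (A : {set T}) :
  injective s -> s @: A \subset A -> s @: A = A.
Proof. by move=> s_inj sA_A; apply/eqP; rewrite eqEcard sA_A (card_imset _ s_inj) leqnn. Qed.

Lemma card_uniform_fibres (aT rT : finType) (A : {set aT}) (phi : aT -> rT) k :
  {in A, forall a, #|[set b in A | phi b == phi a]| = k} -> #|A| = k * #|phi @: A|.
Proof.
move=> fibre_k; rewrite -sum1_card (partition_big_imset phi) /= mulnC -sum_nat_const.
apply: eq_bigr => _ /imsetP[a aA ->].
by rewrite sum1_card -(fibre_k a aA) -cardsE; apply: eq_card => b; rewrite !inE.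
Qed.

Lemma edgesP (T : finType) (r : rel T) e :
  reflect (exists x y, r x y /\ e = [set x; y]) (e \in edges r).
Proof.
apply: (iffP imset2P) => [[x y _]|[x [y [rxy ->]]]].
  by rewrite inE => rxy ->; exists x, y.
by apply: (Imset2spec (x1 := x) (x2 := y)); rewrite ?inE.
Qed.

Lemma edges_set2 (T : finType) (r : rel T) x y : r x y -> [set x; y] \in edges r.
Proof. by move=> rxy; apply/edgesP; exists x, y. Qed.

Lemma mem_edges (T : finType) (r : rel T) (r_sym : symmetric r) x y :
  ([set x; y] \in edges r) = r x y.
Proof.
apply/edgesP/idP => [[a [b [rab /eq_set2[[-> ->]|[-> ->]]]]]|rxy] //.
  by rewrite r_sym.
by exists x, y.
Qed.

(* Maps 'I_n -> 'I_m are counted through their lists of values: [vm_compute]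
   evaluates counts over [tuples_below], but not cardinals of finsets of finfuns. *)
Fixpoint tuples_below (m k : nat) : seq (seq nat) :=
  if k is k'.+1 then [seq x :: l | x <- iota 0 m, l <- tuples_below m k'] else [:: [::]].

Lemma mem_tuples_below m k l :
  (l \in tuples_below m k) = (size l == k) && all (fun x => x < m) l.
Proof.
elim: k l => [|k IHk] [|x l] //=.
  by apply/allpairsP => -[[y l'] /= [_ _]].
apply/allpairsP/idP => [[[y l'] /= [y_m l'_k [-> ->]]]|/andP[l_k /andP[x_m l_m]]].
  by move: y_m l'_k; rewrite mem_iota add0n IHk eqSS /= => -> /andP[-> ->].
by exists (x, l); rewrite mem_iota add0n IHk x_m -eqSS l_k l_m.
Qed.

Lemma uniq_tuples_below m k : uniq (tuples_below m k).
Proof.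
elim: k => //= k IHk; apply: allpairs_uniq => //; first exact: iota_uniq.
by move=> [x l] [y l'] _ _ [-> ->].
Qed.

Section Codes.
Variables m n : nat.

Definition code (s : {ffun 'I_n -> 'I_m}) : seq nat := [seq val (s i) | i <- enum 'I_n].

Lemma size_code s : size (code s) = n.
Proof. by rewrite size_map size_enum_ord. Qed.

Lemma nth_code s (i : 'I_n) : nth 0 (code s) i = s i.
Proof. by rewrite (nth_map i) ?size_enum_ord // nth_ord_enum. Qed.

Lemma code_inj : injective code.
Proof. by move=> s t st; apply/ffunP => i; apply/val_inj; rewrite /= -!nth_code st. Qed.

Lemma mem_codes l : (l \in codom code) = (size l == n) && all (fun x => x < m) l.
Proof.
apply/codomP/andP => [[s ->]|[/eqP l_n /allP l_m]].
  by rewrite size_code; split=> //; apply/allP => _ /mapP[i _ ->]; exact: ltn_ord.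
have lt_l (i : 'I_n) : nth 0 l i < m by apply/l_m/mem_nth; rewrite l_n.
exists [ffun i => Ordinal (lt_l i)].
apply: (eq_from_nth (x0 := 0)) => [|i]; first by rewrite size_code.
by rewrite l_n => lt_i; rewrite -[i]/(val (Ordinal lt_i)) nth_code ffunE.
Qed.

Lemma count_tuples_below (p : pred (seq nat)) :
  count p (tuples_below m n) = #|[pred s | p (code s)]|.
Proof.
have perm_codes : perm_eq (tuples_below m n) (codom code).
  apply: uniq_perm; first exact: uniq_tuples_below.
    by rewrite map_inj_uniq ?enum_uniq //; exact: code_inj.
  by move=> l; rewrite mem_tuples_below mem_codes.
by rewrite (permP perm_codes) codomE count_map enumT cardE /enum_mem size_filter.
Qed.

Lemma code_tuples_below s : code s \in tuples_below m n.
Proof. by rewrite mem_tuples_below -mem_codes codom_f. Qed.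

Lemma injectiveb_code (s : {ffun 'I_n -> 'I_m}) : injectiveb s = uniq (code s).
Proof. by rewrite /code (map_comp val s) map_inj_uniq //; exact: val_inj. Qed.

End Codes.

Lemma forall_ord_iota n (P : pred nat) : [forall i : 'I_n, P i] = all P (iota 0 n).
Proof.
rewrite -val_enum_ord all_map.
by apply/forallP/allP => [P_n i _ | P_n i]; [exact: P_n | apply: P_n; rewrite mem_enum].
Qed.

Definition precomp (F T : finType) (f : {ffun F -> T}) (s : {ffun F -> F}) :
  {ffun F -> T} := [ffun i => f (s i)].

Lemma precompE (F T : finType) (f : {ffun F -> T}) s i : precomp f s i = f (s i).
Proof. exact: ffunE. Qed.

Lemma card_precomp (F T : finType) (f : {ffun F -> T}) (S : {set {ffun F -> F}}) :
  injective f -> #|precomp f @: S| = #|S|.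
Proof.
move=> f_inj; apply: card_imset => s t /ffunP st; apply/ffunP => i.
by apply: f_inj; rewrite -!precompE st.
Qed.

Lemma precomp_factor (F T : finType) (f g : {ffun F -> T}) :
  (forall i, g i \in codom f) -> exists s, g = precomp f s.
Proof.
move=> g_f; exists [ffun i => iinv (g_f i)].
by apply/ffunP => i; rewrite precompE ffunE f_iinv.
Qed.

Section Embeddings.
Variables (F T : finType) (adjF : rel F) (adj : rel T).

Definition embeddings : {set {ffun F -> T}} :=
  [set f : {ffun F -> T} | injectiveb f && [forall i, forall j, adjF i j ==> adj (f i) (f j)]].

Lemma embeddingsP (f : {ffun F -> T}) :
  reflect (injective f /\ forall i j, adjF i j -> adj (f i) (f j)) (f \in embeddings).
Proof.
rewrite inE; apply: (iffP andP) => [[/injectiveP f_inj /forallP f_hom]|[f_inj f_hom]].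
  by split=> // i j; move/forallP: (f_hom i) => /(_ j)/implyP.
split; first exact/injectiveP.
by apply/forallP => i; apply/forallP => j; apply/implyP/f_hom.
Qed.

Definition copy_of (f : {ffun F -> T}) : {set T} * {set {set T}} :=
  (f @: setT, [set f @: (e : {set F}) | e in edges adjF]).

Hypothesis adj_sym : symmetric adj.

Lemma nsub_embeddings : nsub adjF adj = #|copy_of @: embeddings|.
Proof.
rewrite /nsub; apply: eq_card => -[V E]; rewrite inE /=; apply/idP/imsetP.
  case/and3P=> E_edges _ /existsP[f /and3P[/injectiveP f_inj /eqP V_f /eqP E_f]].
  exists f; last by rewrite /copy_of V_f E_f.
  apply/embeddingsP; split=> // i j adj_ij.
  rewrite -(mem_edges adj_sym) -imset_set2; apply: (subsetP E_edges).
  by rewrite E_f imset_f // edges_set2.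
case=> f /embeddingsP[f_inj f_hom] [-> ->]; apply/and3P; split.
- apply/subsetP => _ /imsetP[_ /edgesP[i [j [adj_ij ->]]] ->].
  by rewrite imset_set2 mem_edges // f_hom.
- by apply/forall_inP => _ /imsetP[e _ ->]; apply/imsetS/subsetT.
- by apply/existsP; exists f; rewrite !eqxx !andbT; apply/injectiveP.
Qed.

End Embeddings.

(* For finite graphs injective endomorphisms are exactly the automorphisms. *)
Definition automorphisms (F : finType) (adjF : rel F) := embeddings adjF adjF.

Section Automorphisms.
Variables (F T : finType) (adjF : rel F) (adj : rel T).
Hypothesis adjF_sym : symmetric adjF.

Lemma precomp_embedding (f : {ffun F -> T}) (s : {ffun F -> F}) :
  f \in embeddings adjF adj -> s \in automorphisms adjF ->
  precomp f s \in embeddings adjF adj.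
Proof.
move=> /embeddingsP[f_inj f_hom] /embeddingsP[s_inj s_hom]; apply/embeddingsP; split.
  by move=> i j; rewrite !precompE => /f_inj/s_inj.
by move=> i j adj_ij; rewrite !precompE f_hom ?s_hom.
Qed.

Lemma automorphism_edges s :
  s \in automorphisms adjF -> [set s @: (e : {set F}) | e in edges adjF] = edges adjF.
Proof.
case/embeddingsP=> s_inj s_hom; apply: imset_inj_sub; first exact: imset_inj.
apply/subsetP => _ /imsetP[_ /edgesP[i [j [adj_ij ->]]] ->].
by rewrite imset_set2 mem_edges // s_hom.
Qed.

Lemma copy_of_precomp (f : {ffun F -> T}) (s : {ffun F -> F}) :
  s \in automorphisms adjF -> copy_of adjF (precomp f s) = copy_of adjF f.
Proof.
move=> s_aut; have [s_inj _] := embeddingsP _ _ _ s_aut.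
have precomp_imset (A : {set F}) : precomp f s @: A = f @: (s @: A).
  by rewrite -imset_comp; apply: eq_imset => i; rewrite precompE.
rewrite /copy_of precomp_imset imset_inj_sub ?subsetT //; congr pair.
rewrite -[in RHS](automorphism_edges s_aut) -imset_comp.
by apply: eq_imset => e; rewrite /= precomp_imset.
Qed.

Lemma copy_fibre (f : {ffun F -> T}) : f \in embeddings adjF adj ->
  [set g in embeddings adjF adj | copy_of adjF g == copy_of adjF f] =
  precomp f @: automorphisms adjF.
Proof.
move=> f_emb; have [f_inj _] := embeddingsP _ _ _ f_emb.
apply/setP => g; rewrite inE; apply/andP/imsetP => [[g_emb /eqP[g_V g_E]]|[s s_aut ->]].
  have [g_inj g_hom] := embeddingsP _ _ _ g_emb.
  have [s def_g] : exists s, g = precomp f s.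
    apply: precomp_factor => i; have: g i \in g @: setT by apply: imset_f.
    by rewrite g_V => /imsetP[j _ ->]; apply: codom_f.
  exists s => //; apply/embeddingsP; split.
    by move=> i j s_ij; apply: g_inj; rewrite def_g !precompE s_ij.
  move=> i j adj_ij.
  have: g @: [set i; j] \in [set g @: (e : {set F}) | e in edges adjF].
    by rewrite imset_f ?edges_set2.
  rewrite g_E => /imsetP[e e_edge].
  rewrite def_g !imset_set2 !precompE -imset_set2 => /(imset_inj f_inj) s_ij.
  by rewrite -(mem_edges adjF_sym) s_ij.
by rewrite precomp_embedding ?copy_of_precomp.
Qed.

Lemma card_embeddings :
  symmetric adj -> #|embeddings adjF adj| = #|automorphisms adjF| * nsub adjF adj.
Proof.
move=> adj_sym; rewrite nsub_embeddings //; apply: card_uniform_fibres => f f_emb.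
by rewrite copy_fibre // card_precomp //; case/embeddingsP: f_emb.
Qed.

End Automorphisms.

Definition is_hom_code (n : nat) (r : rel nat) (l : seq nat) : bool :=
  all (fun i => all (fun j => r i j ==> r (nth 0 l i) (nth 0 l j)) (iota 0 n)) (iota 0 n).

Lemma automorphisms_code n (r : rel nat) (s : {ffun 'I_n -> 'I_n}) :
  (s \in automorphisms (fun i j : 'I_n => r i j)) =
  uniq (code s) && is_hom_code n r (code s).
Proof.
rewrite inE injectiveb_code /is_hom_code -forall_ord_iota; congr andb.
by apply: eq_forallb => i; rewrite -forall_ord_iota; apply: eq_forallb => j; rewrite !nth_code.
Qed.

(* [C3L2_adj] on the underlying naturals, where [vm_compute] can evaluate it. *)
Definition c3l2_nat (a b : nat) : bool :=
  [|| (a < 3) && (b < 3) && (a != b), (a == 3) && (b == 4) | (a == 4) && (b == 3)].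

Lemma C3L2_adjE : C3L2_adj = (fun i j : 'I_5 => c3l2_nat i j).
Proof. by []. Qed.

Lemma C3L2_adj_sym : symmetric C3L2_adj.
Proof. by move=> [[|[|[|[|[|i]]]]] ?] [[|[|[|[|[|j]]]]] ?]. Qed.

Lemma card_automorphisms_C3L2 : #|automorphisms C3L2_adj| = 12.
Proof.
transitivity (count (fun l => uniq l && is_hom_code 5 c3l2_nat l) (tuples_below 5 5)).
  by rewrite count_tuples_below C3L2_adjE; apply: eq_card => s; rewrite automorphisms_code.
by vm_compute.
Qed.

Notation o0 := (@Ordinal 5 0 isT).
Notation o1 := (@Ordinal 5 1 isT).
Notation o2 := (@Ordinal 5 2 isT).
Notation o3 := (@Ordinal 5 3 isT).
Notation o4 := (@Ordinal 5 4 isT).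

(* Roles: 0 on the triangle edge {0,1}, 1 on the apex 2, 2 on the edge {3,4}. *)
Definition role (a : nat) : nat := (2 <= a) + (3 <= a).

Definition role_class (k : nat) : {set 'I_5} := [set i : 'I_5 | role i == k].

Lemma role_class0 : role_class 0 = [set o0; o1].
Proof. by apply/setP => -[[|[|[|[|[|i]]]]] ?]; rewrite !inE. Qed.

Lemma role_class1 : role_class 1 = [set o2].
Proof. by apply/setP => -[[|[|[|[|[|i]]]]] ?]; rewrite !inE. Qed.

Lemma role_class2 : role_class 2 = [set o3; o4].
Proof. by apply/setP => -[[|[|[|[|[|i]]]]] ?]; rewrite !inE. Qed.

Definition role_preserving : {set {ffun 'I_5 -> 'I_5}} :=
  [set s : {ffun 'I_5 -> 'I_5} | injectiveb s && [forall i, role (s i) == role i]].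

Definition is_role_code (l : seq nat) : bool :=
  uniq l && all (fun i => role (nth 0 l i) == role i) (iota 0 5).

Lemma role_preserving_code s : (s \in role_preserving) = is_role_code (code s).
Proof.
rewrite inE injectiveb_code /is_role_code -forall_ord_iota; congr andb.
by apply: eq_forallb => i; rewrite nth_code.
Qed.

Lemma card_role_preserving : #|role_preserving| = 4.
Proof.
transitivity (count is_role_code (tuples_below 5 5)); last by vm_compute.
by rewrite count_tuples_below; apply: eq_card => s; rewrite role_preserving_code.
Qed.

Lemma role_preserving_automorphisms : role_preserving \subset automorphisms C3L2_adj.
Proof.
have role_hom : all (fun l => is_role_code l ==> uniq l && is_hom_code 5 c3l2_nat l)
                    (tuples_below 5 5) by vm_compute.
apply/subsetP => s; rewrite role_preserving_code C3L2_adjE automorphisms_code.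
exact: implyP (allP role_hom _ (code_tuples_below s)).
Qed.

Lemma role_lt3 a : role a < 3.
Proof. by rewrite /role; case: (2 <= a); case: (3 <= a). Qed.

Definition Q_triple_of {T : finType} (f : {ffun 'I_5 -> T}) :
  {set {set T}} * {set T} * T :=
  ([set [set f o0; f o1]; [set f o3; f o4]], [set f o0; f o1], f o2).

Lemma Q_triple_of_roles (T : finType) (f : {ffun 'I_5 -> T}) :
  Q_triple_of f = ([set f @: role_class 0; f @: role_class 2], f @: role_class 0, f o2).
Proof. by rewrite role_class0 role_class2 !imset_set2. Qed.

Lemma Q_triple_fibre (T : finType) (adj : rel T) (f : {ffun 'I_5 -> T}) :
  f \in embeddings C3L2_adj adj ->
  [set g in embeddings C3L2_adj adj | Q_triple_of g == Q_triple_of f] =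
  precomp f @: role_preserving.
Proof.
move=> f_emb; have [f_inj _] := embeddingsP _ _ _ f_emb.
apply/setP => g; rewrite inE; apply/andP/imsetP => [[g_emb]|[s s_role ->]].
  rewrite !Q_triple_of_roles => /eqP[g_P g_0 g_2]; rewrite g_0 in g_P.
  have g_roles k : k < 3 -> g @: role_class k = f @: role_class k.
    case: k => [|[|[|//]]] _ //; first by rewrite role_class1 !imset_set1 g_2.
    exact: set2_cancel g_P.
  have g_role i : g i \in f @: role_class (role i).
    by rewrite -g_roles ?role_lt3 // imset_f // inE.
  have [s def_g] : exists s, g = precomp f s.
    by apply: precomp_factor => i; case/imsetP: (g_role i) => j _ ->; apply: codom_f.
  have [g_inj _] := embeddingsP _ _ _ g_emb.
  exists s => //; rewrite inE; apply/andP; split.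
    by apply/injectiveP => i j s_ij; apply: g_inj; rewrite def_g !precompE s_ij.
  by apply/forallP => i; move: (g_role i); rewrite def_g precompE mem_imset // inE.
have := s_role; rewrite inE => /andP[/injectiveP s_inj /forallP s_roles].
have s_class k : s @: role_class k = role_class k.
  apply: imset_inj_sub => //; apply/subsetP => _ /imsetP[i i_k ->].
  by move: i_k; rewrite !inE => /eqP <-; apply: s_roles.
have precomp_class k : precomp f s @: role_class k = f @: role_class k.
  by rewrite -[in RHS]s_class -imset_comp; apply: eq_imset => i; rewrite /= precompE.
have s_o2 : s o2 = o2.
  by apply/set1P; rewrite -role_class1 -(s_class 1) imset_f // role_class1 set11.
rewrite precomp_embedding ?(subsetP role_preserving_automorphisms) //=.
by rewrite !Q_triple_of_roles !precomp_class precompE s_o2.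
Qed.

Definition Q_triples (T : finType) (adj : rel T) : {set {set {set T}} * {set T} * T} :=
  [set x | [&& x.1.1 \in Qset adj, x.1.2 \in x.1.1, x.2 \in ~: cover x.1.1
             & [forall y in x.1.2, adj y x.2]]].

Lemma prod_aent (T : finType) (adj : rel T) (e : {set T}) w :
  \prod_(x in e) aent adj x w = [forall x in e, adj x w].
Proof.
have [e_w | /forall_inPn[x x_e not_xw]] := boolP [forall x in e, adj x w].
  by rewrite big1 // => x /(forall_inP e_w); rewrite /aent => ->.
by rewrite (bigD1 x) //= /aent (negbTE not_xw).
Qed.

Lemma sum_Q_term (T : finType) (adj : rel T) :
  \sum_(P in Qset adj) Q_term adj P = #|Q_triples adj|.
Proof.
have edge_termE P e :
    edge_term adj e (cover P) = \sum_(w | (w \in ~: cover P) && [forall y in e, adj y w]) 1.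
  by rewrite big_mkcondr /edge_term; apply: eq_bigr => w _; rewrite prod_aent; case: ifP.
rewrite /Q_term (eq_bigr _ (fun P _ => eq_bigr _ (fun e _ => edge_termE P e))).
rewrite !pair_big_dep /= -sum1_card; apply: eq_bigl => -[[P e] w].
by rewrite [RHS]inE /= !andbA.
Qed.

Definition ffun5 (T : finType) (s t w u v : T) : {ffun 'I_5 -> T} :=
  [ffun i : 'I_5 => nth s [:: s; t; w; u; v] i].

Lemma ffun5_embedding (T : finType) (adj : rel T) (s t w u v : T) :
  symmetric adj -> uniq [:: s; t; w; u; v] ->
  adj s t -> adj s w -> adj t w -> adj u v ->
  ffun5 s t w u v \in embeddings C3L2_adj adj.
Proof.
move=> adj_sym stwuv_uniq st sw tw uv; apply/embeddingsP; split.
  by move=> i j; rewrite !ffunE => /eqP; rewrite nth_uniq // => /eqP/val_inj.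
move=> [[|[|[|[|[|i]]]]] ?] [[|[|[|[|[|j]]]]] ?] //= _.
all: by rewrite !ffunE //= adj_sym.
Qed.

Lemma Q_triple_of_ffun5 (T : finType) (s t w u v : T) :
  Q_triple_of (ffun5 s t w u v) = ([set [set s; t]; [set u; v]], [set s; t], w).
Proof. by rewrite /Q_triple_of !ffunE. Qed.

Lemma Q_triple_witness (T : finType) (adj : rel T) (s t w u v : T) :
  symmetric adj -> uniq [:: s; t; w; u; v] ->
  adj s t -> adj s w -> adj t w -> adj u v ->
  ([set [set s; t]; [set u; v]], [set s; t], w) \in Q_triple_of @: embeddings C3L2_adj adj.
Proof.
move=> adj_sym stwuv_uniq st sw tw uv; rewrite -Q_triple_of_ffun5.
by apply: imset_f; apply: ffun5_embedding.
Qed.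

Lemma Q_triples_embeddings (T : finType) (adj : rel T) :
  symmetric adj -> Q_triples adj = Q_triple_of @: embeddings C3L2_adj adj.
Proof.
move=> adj_sym; apply/setP => -[[P e] w]; apply/idP/idP.
  rewrite inE /= => /and4P[+ e_P w_P /forall_inP e_w].
  rewrite inE => /existsP[s /existsP[t /existsP[u /existsP[v]]]].
  case/and4P=> /and5P[s_t s_u s_v t_u /andP[t_v u_v]] st uv /eqP P_def.
  move: e_P w_P e_w; rewrite P_def in_setC cover_set2 !inE !negb_or.
  move=> e_P /andP[/andP[w_s w_t] /andP[w_u w_v]].
  case/orP: e_P => /eqP-> e_w.
    apply: Q_triple_witness; rewrite ?e_w ?set21 ?set22 //=.
    by rewrite !inE !negb_or; do !(apply/andP; split) => //; rewrite eq_sym.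
  rewrite (setUC [set [set s; t]]); apply: Q_triple_witness; rewrite ?e_w ?set21 ?set22 //=.
  by rewrite !inE !negb_or; do !(apply/andP; split) => //; rewrite eq_sym.
case/imsetP=> f /embeddingsP[f_inj f_hom] [-> -> ->].
have f_neq i j : i != j -> f i != f j by apply: contra => /eqP/f_inj->.
rewrite inE /=; apply/and4P; split.
- rewrite inE; apply/existsP; exists (f o0); apply/existsP; exists (f o1).
  apply/existsP; exists (f o3); apply/existsP; exists (f o4).
  by rewrite !f_neq // !f_hom // eqxx.
- exact: set21.
- by rewrite in_setC cover_set2 !inE !negb_or !f_neq.
- by apply/forall_inP => y; rewrite !inE => /orP[] /eqP->; apply: f_hom.
Qed.

Lemma card_embeddings_C3L2 (T : finType) (adj : rel T) :
  symmetric adj -> #|embeddings C3L2_adj adj| = 4 * #|Q_triples adj|.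
Proof.
move=> adj_sym; rewrite Q_triples_embeddings //; apply: card_uniform_fibres => f f_emb.
by rewrite Q_triple_fibre // card_precomp ?card_role_preserving //; case/embeddingsP: f_emb.
Qed.

Local Open Scope ring_scope.

Theorem proposition4 (T : finType) (adj : rel T)
    (adj_sym : symmetric adj) (adj_irr : irreflexive adj) :
  ((nsub C3L2_adj adj)%:R : rat) =
    3^-1 * (\sum_(P in Qset adj) Q_term adj P)%N%:R.
Proof.
have := card_embeddings C3L2_adj_sym adj_sym.
rewrite card_automorphisms_C3L2 card_embeddings_C3L2 // -sum_Q_term => card_eq.
have -> : (\sum_(P in Qset adj) Q_term adj P)%N = (3 * nsub C3L2_adj adj)%N.
  by apply/eqP; rewrite -(eqn_pmul2l (isT : (0 < 4)%N)) card_eq mulnA.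
by rewrite natrM mulrA mulVf ?mul1r.
Qed.
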